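(* Let $d\ge 1$, $n\ge 1$, $r\ge 0$ be integers and let $N$ be a polynomial (with complex coefficients) in the components of $u\in\mathbb{C}^n$ and of all its spatial partial derivatives $D^\alpha u$, $|\alpha|\le r$, $x\in\mathbb{T}^d$. Let $s>s_0=d+r$ and $C>0$. Suppose $a=(a_k)_{k\in\mathbb{Z}^d}$, $a_k\in\mathbb{C}^n$, satisfies $|a_k|\le C/|k|^s$ for $k\neq 0$ and $|a_0|\le C$. Then the formal series defining $N_k(a)$, $\frac{\partial N_k}{\partial a_j}(a)$ and $\frac{\partial^2 N_k}{\partial a_{j_1}\partial a_{j_2}}(a)$ (for all $k,j,j_1,j_2\in\mathbb{Z}^d$) are absolutely convergent, and there exist constants $D=D(C,s)$, $D_1=D_1(C,s)$, $D_2=D_2(C,s)$ (depending also on the fixed $N$, $d$, $r$) such that for all $k,j,j_1,j_2\in\mathbb{Z}^d$: $$|N_k|\le \frac{D}{|k|^{s-r}}\ (k\neq 0),\qquad |N_0|\le D,$$ $$\left|\frac{\partial N_k}{\partial a_j}\right|\le \frac{D_1|j|^r}{|k-j|^{s-r}}\ (k\neq j),\qquad \left|\frac{\partial N_k}{\partial a_j}\right|\le D_1|j|^r\ (k=j),$$ $$\left|\frac{\partial^2 N_k}{\partial a_{j_1}\partial a_{j_2}}\right|\le \frac{D_2|j_1|^r|j_2|^r}{|k-j_1-j_2|^{s-r}}\ (k\neq j_1+j_2),\qquad \left|\frac{\partial^2 N_k}{\partial a_{j_1}\partial a_{j_2}}\right|\le D_2|j_1|^r|j_2|^r\ (k=j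_1+j_2).$$
   Context: $\mathbb{T}^d=(\mathbb{R}\bmod 2\pi)^d$. On $\mathbb{Z}^d$ a norm $|\cdot|$ is fixed satisfying $|(k_1,\dots,k_d)|\ge |k_j|$ for each $j$; by convention $|0|$ is redefined to be $1$ in these estimates. For $\alpha\in\mathbb{N}^d$, $D^\alpha$ denotes the partial derivative $\partial^{|\alpha|}/\partial x_1^{\alpha_1}\cdots\partial x_d^{\alpha_d}$, $|\alpha|=\sum\alpha_i$, and $k^\alpha=k_1^{\alpha_1}\cdots k_d^{\alpha_d}$. To a sequence $a=(a_k)$ associate the formal series $u=\sum_k a_k e^{\mathrm{i}k\cdot x}$, so $D^\alpha u$ has formal Fourier coefficients $\mathrm{i}^{|\alpha|}k^\alpha a_k$. $N_k(a)$ is the formal $k$-th Fourier coefficient of $N(u,Du,\dots,D^ru)$, obtained by expanding each monomial of $N$ as a convolution sum $\sum_{k_1+\dots+k_l=k} v_{k_1}\cdots v_{k_l}$ where each $v_{k_i}$ is a Fourier coefficient of a component of $u$ or of one of its derivatives of order $\le r$. The symbols for derivatives are the formal series $$\frac{\partial N_k}{\partial a_j}=\sum_{|\alpha|\le r}\Big(\frac{\partial N}{\partial(D^\alpha u)}(u,\dots,D^ru)\Big)_{k-j}\mathrm{i}^{|\alpha|}j^\alpha,$$ $$\frac{\partial^2 N_k}{\partial a_{j_1}\partial a_{j_2}}=\sum_{|\alpha_1|,|\alpha_2|\le r}\Big(\frac{\partial^2 N}{\partial(D^{\alpha_1}u)\partial(D^{\alpha_2}u)}(u,\dots,D^ru)\Big)_{k-j_1-j_2}\mathrm{i}^{|\alpha_1|+|\alpha_2|}j_1^{\alpha_1}j_2^{\alpha_2},$$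 where $\partial N/\partial(D^\alpha u)$ denotes the partial derivative of the polynomial $N$ with respect to the argument slot $D^\alpha u$, and $(\cdot)_m$ is the formal $m$-th Fourier coefficient (convolution expansion) of the resulting polynomial expression. *)

(* Complex numbers are R[i] for an
   arbitrary R : realType (mathcomp-real-closed 'complex'), given the
   topology/normed structure of a numClosedFieldType via the ^o alias. *)
From HB Require Import structures.
From mathcomp Require Import all_boot all_order all_algebra.
From mathcomp Require Import finmap.
From mathcomp Require Import all_classical all_reals all_analysis.
From mathcomp Require Import complex.
Import numFieldTopology.Exports numFieldNormedType.Exports.
Import Order.TTheory GRing.Theory Num.Theory.

Set Implicit Arguments.
Unset Strict Implicit.
Unset Printing Implicit Defensive.

Local Open Scope classical_set_scope.
Local Open Scope complex_scope.
Local Open Scope ring_scope.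

Definition Cpl (R : realType) := (R[i])^o.

Definition Zd (d : nat) := 'rV[int]_d.

Definition is_Zd_norm (R : realType) (d : nat) (nrm : Zd d -> R) : Prop :=
  [/\ forall k : Zd d, 0 <= nrm k,
      forall k : Zd d, nrm k = 0 -> k = 0,
      forall k l : Zd d, nrm (k + l) <= nrm k + nrm l,
      forall (m : int) (k : Zd d), nrm (m *: k) = (`|m|%:~R) * nrm k
    & forall (k : Zd d) (j : 'I_d), (`|k ord0 j|%:~R) <= nrm k].

(* The convention |0| := 1 used in the estimates. *)
Definition nrm1 (R : realType) (d : nat) (nrm : Zd d -> R) (k : Zd d) : R :=
  if k == 0 then 1 else nrm k.

(* Multi-indices alpha with entries <= r (the order constraint |alpha| <= r
   is imposed separately); |alpha| = sum of entries. *)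
Definition mindex (d r : nat) := {ffun 'I_d -> 'I_r.+1}.
Definition mdeg (d r : nat) (al : mindex d r) : nat := (\sum_(j < d) al j)%N.

Definition zpow (R : realType) (d r : nat) (k : Zd d) (al : mindex d r) : Cpl R :=
  \prod_(j < d) ((k ord0 j)%:~R) ^+ (al j).
Arguments zpow {R d r} k al.

(* A "slot" (i, alpha) stands for the i-th component of D^alpha u. *)
Definition slot (n d r : nat) := ('I_n * mindex d r)%type.

(* A polynomial N (complex coefficients) in the slots, given as a finite list
   of monomials  c * v_1 * ... * v_l  (c, [:: v_1; ...; v_l]). *)
Definition cpoly (R : realType) (n d r : nat) := seq (Cpl R * seq (slot n d r)).

Definition order_le (R : realType) (n d r : nat) (P : cpoly R n d r) : Prop :=
  forall m, m \in P -> forall v, v \in m.2 -> (mdeg v.2 <= r)%N.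

(* Partial derivative of a polynomial with respect to the slot v
   (product rule: remove one occurrence of v in each monomial, in all ways). *)
Definition rem_at (T : Type) (p : nat) (s : seq T) : seq T :=
  take p s ++ drop p.+1 s.

Definition pderiv (R : realType) (n d r : nat) (v : slot n d r)
  (P : cpoly R n d r) : cpoly R n d r :=
  flatten [seq [seq (m.1, rem_at p m.2) | p <- iota 0 (size m.2) &
                     nth v m.2 p == v] | m <- P].

(* Formal Fourier coefficient of the slot v = (i, alpha), i.e. of D^alpha u_i,
   at q, for u = sum_k a_k e^{ik.x}:  i^{|alpha|} q^alpha (a_q)_i. *)
Definition vcoef (R : realType) (n d r : nat) (a : Zd d -> 'I_n -> Cpl R)
  (v : slot n d r) (q : Zd d) : Cpl R :=
  'i ^+ mdeg v.2 * zpow q v.2 * a q v.1.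

(* The family of terms of the convolution sum of the monomial v_1 ... v_l at k:
   indexed by sequences (k_1, ..., k_l) of Z^d; the terms with
   k_1 + ... + k_l <> k (or wrong length) are 0. *)
Definition mono_fam (R : realType) (n d r : nat) (a : Zd d -> 'I_n -> Cpl R)
  (vs : seq (slot n d r)) (k : Zd d) : seq (Zd d) -> Cpl R :=
  fun t => if (size t == size vs) && (\sum_(q <- t) q == k)
           then \prod_(x <- zip vs t) vcoef a x.1 x.2 else 0.

Definition totally {I : choiceType} : set_system {fset I} :=
  filter_from setT (fun A => [set B | (A `<=` B)%fset]).

Definition abs_summable (R : realType) (I : choiceType) (f : I -> Cpl R) : Prop :=
  exists M : R, forall J : {fset I}, \sum_(i <- J) `|f i| <= M%:C.

Definition usum (R : realType) (I : choiceType) (f : I -> Cpl R) : Cpl R :=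
  lim ((fun J : {fset I} => \sum_(i <- J) f i) @ totally).

(* The formal k-th Fourier coefficient of P(u, Du, ..., D^r u). *)
Definition Fc (R : realType) (n d r : nat) (a : Zd d -> 'I_n -> Cpl R)
  (P : cpoly R n d r) (k : Zd d) : Cpl R :=
  \sum_(m <- P) m.1 * usum (mono_fam a m.2 k).

Definition Fc_abs (R : realType) (n d r : nat) (a : Zd d -> 'I_n -> Cpl R)
  (P : cpoly R n d r) (k : Zd d) : Prop :=
  forall m, m \in P -> abs_summable (mono_fam a m.2 k).

Definition dN (R : realType) (n d r : nat) (a : Zd d -> 'I_n -> Cpl R)
  (P : cpoly R n d r) (k j : Zd d) (i : 'I_n) : Cpl R :=
  \sum_(al : mindex d r | (mdeg al <= r)%N)
     Fc a (pderiv (i, al) P) (k - j) * 'i ^+ mdeg al * zpow j al.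

Definition d2N (R : realType) (n d r : nat) (a : Zd d -> 'I_n -> Cpl R)
  (P : cpoly R n d r) (k j1 j2 : Zd d) (i1 i2 : 'I_n) : Cpl R :=
  \sum_(al1 : mindex d r | (mdeg al1 <= r)%N)
  \sum_(al2 : mindex d r | (mdeg al2 <= r)%N)
     Fc a (pderiv (i2, al2) (pderiv (i1, al1) P)) (k - j1 - j2)
       * 'i ^+ (mdeg al1 + mdeg al2) * zpow j1 al1 * zpow j2 al2.

From HB Require Import structures.
From mathcomp Require Import all_boot all_order all_algebra.
From mathcomp Require Import finmap.
From mathcomp Require Import all_classical all_reals all_analysis.
From mathcomp Require Import complex.
From mathcomp Require Import ring lra.
From mathcomp.analysis.showcase Require summability.
Import numFieldTopology.Exports numFieldNormedType.Exports.
Import Order.TTheory GRing.Theory Num.Theory.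
Local Open Scope classical_set_scope.
Local Open Scope complex_scope.
Local Open Scope ring_scope.
Set Implicit Arguments.
Unset Strict Implicit.
Unset Printing Implicit Defensive.

(* Put sig = s - r and w(q) = |q|^-sig (with |0| = 1).  As |q^alpha| <= |q|^r
   for |alpha| <= r, the hypothesis on a says |(D^alpha u_i)_q| <= C w(q).
   Since sig > d, w is summable over Z^d (it is dominated by a product of d
   one-dimensional p-series of exponent sig/d > 1, summed dyadically), and it
   satisfies the convolution inequality sum_q w(q) w(k - q) <= K w(k): one of
   |q|, |k - q| is at least |k|/2, so the corresponding factor is at most
   2^sig w(k).  Iterating, the l-fold convolution sum of a monomial of degree l
   converges absolutely with sum at most (C K)^l w(k).  The derivative symbols
   are finite sums of the coefficients of partial derivatives of N, multiplied
   by i^|alpha| j^alpha with |j^alpha| <= |j|^r. *)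

Lemma ler_sum_uniq_subset {R : numDomainType} {T : eqType} (s1 s2 : seq T)
    (F : T -> R) :
  uniq s1 -> uniq s2 -> {subset s1 <= s2} -> (forall x, 0 <= F x) ->
  \sum_(x <- s1) F x <= \sum_(x <- s2) F x.
Proof.
move=> s1_uniq s2_uniq s12 F_ge0.
have s1E : perm_eq [seq x <- s2 | x \in s1] s1.
  apply: uniq_perm; rewrite ?filter_uniq // => x.
  by rewrite mem_filter andb_idr //; apply: s12.
rewrite -(perm_big _ s1E) big_filter [X in _ <= X](bigID (fun x => x \in s1)).
by rewrite lerDl sumr_ge0.
Qed.

Instance totally_proper (I : choiceType) : ProperFilter (@totally I) :=
  @summability.totally_filter I.

Section unordered_sums.
Variables (R : realType) (I : choiceType).

Definition psum (V : zmodType) (f : I -> V) (J : {fset I}) : V :=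
  \sum_(i <- J) f i.

Lemma nonneg_psum_cvg (p : I -> R) (M : R) :
  (forall i, 0 <= p i) -> (forall J, psum p J <= M) -> cvg (psum p @ totally).
Proof.
move=> p_ge0 pM; set E := range (psum p).
have supE : has_sup E.
  by split; [exists (psum p fset0), fset0 | exists M => _ [J _ <-]].
apply/cvg_ex; exists (sup E); apply/cvgrPdist_lt => e e_gt0.
have [_ [J0 _ <-] J0E] := sup_adherent e_gt0 supE.
exists J0 => // J /= /fsubsetP J0J.
have J0_le_J : psum p J0 <= psum p J by apply: ler_sum_uniq_subset; rewrite ?fset_uniq.
have J_le_sup : psum p J <= sup E by apply: sup_upper_bound => //; exists J.
rewrite ger0_norm ?subr_ge0 // ltrBlDr -ltrBlDl.
exact: lt_le_trans J0E J0_le_J.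
Qed.

Lemma real_psum_cvg (g : I -> R) (M : R) :
  (forall J, psum (fun i => `|g i|) J <= M) ->
  exists2 l, psum g @ totally --> l & `|l| <= M.
Proof.
move=> gM.
(* g = (|g| + g) - |g| splits g into two nonnegative families. *)
have psumE : psum g = psum (fun i => `|g i| + g i) \- psum (fun i => `|g i|).
  apply/funext => J /=; rewrite /psum -sumrB.
  by apply: eq_bigr => i _; rewrite addrC addKr.
have /cvg_ex[l1 cv1] : cvg (psum (fun i => `|g i| + g i) @ totally).
  apply: (@nonneg_psum_cvg _ (M + M)) => [i|J].
    by have := ler_norm (- g i); rewrite normrN; lra.
  rewrite /psum big_split lerD //; apply: le_trans (gM J) => //.
  by apply: ler_sum => i _; exact: ler_norm.
have /cvg_ex[l2 cv2] : cvg (psum (fun i => `|g i|) @ totally).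
  exact: (@nonneg_psum_cvg _ M).
have cv : psum g @ totally --> l1 - l2 by rewrite psumE; exact: cvgB.
exists (l1 - l2) => //; apply: cvgr_to_le (cvg_norm cv) _.
by near=> J; apply: le_trans (gM J); exact: ler_norm_sum.
Unshelve. all: by end_near.
Qed.

End unordered_sums.

Section complex_sums.
Variable R : realType.

Lemma norm_realC (x : R) : `|x%:C| = `|x|%:C :> R[i].
Proof. by rewrite normc_def /= expr0n addr0 sqrtr_sqr. Qed.

Lemma normc_ge_Im (z : R[i]) : `|complex.Im z|%:C <= `|z|.
Proof.
by rewrite -normrN -ReiNIm (le_trans (normc_ge_Re _)) // normrM normCi mulr1.
Qed.

Lemma cvg_realC {T : Type} {F : set_system T} {FF : Filter F} (f : T -> R) (l : R) :
  f @ F --> l -> (fun t => (f t)%:C : Cpl R) @ F --> (l%:C : Cpl R).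
Proof.
move=> /cvgrPdist_lt fl; apply/cvgrPdist_lt => e.
rewrite ltcE /= => /andP[/eqP Im_e Re_e_gt0].
have -> : e = (complex.Re e)%:C by apply/eqP; rewrite eq_complex /= Im_e !eqxx.
by apply: filterS (fl _ Re_e_gt0) => t; rewrite -rmorphB norm_realC ltcR.
Qed.

Lemma usum_norm_le (I : choiceType) (f : I -> Cpl R) (M : R) :
  (forall J : {fset I}, \sum_(i <- J) `|f i| <= M%:C) -> `|usum f| <= (M + M)%:C.
Proof.
move=> fM.
have partsM (p : R[i] -> R) : (forall z, `|p z|%:C <= `|z|) ->
    forall J, psum (fun i => `|p (f i)|) J <= M.
  move=> p_le J; rewrite -lecR rmorph_sum; apply: le_trans (fM J).
  by apply: ler_sum => i _; exact: p_le.
have [x cvx xM] := real_psum_cvg (partsM _ (@normc_ge_Re R)).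
have [y cvy yM] := real_psum_cvg (partsM _ normc_ge_Im).
have psumE : psum f = fun J => (psum (fun i => complex.Re (f i)) J)%:C
                              + 'i * (psum (fun i => complex.Im (f i)) J)%:C.
  apply/funext => J; rewrite !rmorph_sum mulr_sumr -big_split /=.
  by apply: eq_bigr => i _; rewrite -complexE.
have cv : psum f @ totally --> (x%:C + 'i * y%:C : Cpl R).
  by rewrite psumE; apply: cvgD; [|apply: cvgMl_tmp]; exact: cvg_realC.
rewrite /usum (cvg_lim (@norm_hausdorff _ _) cv).
rewrite (le_trans (ler_normD _ _)) // normrM normCi mul1r !norm_realC.
by rewrite -rmorphD lecR lerD.
Qed.

End complex_sums.

Section riemannR_sums.
Variables (R : realType) (a : R).
Hypothesis a_gt1 : 1 < a.

Let rho : R := 2 `^ (1 - a).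

Let rho_gt0 : 0 < rho. Proof. by rewrite powR_gt0. Qed.

Let rho_lt1 : rho < 1.
Proof.
rewrite lt_neqAle powR_eq1 subr_eq0 (lt_eqF a_gt1) orbF.
rewrite -[X in _ <= X](powRr0 2) ler_powR ?ler1n ?subr_le0 ?(ltW a_gt1) //.
by rewrite andbT pnatr_eq1 ltNge ler0n.
Qed.

Lemma riemannR_dyadic_block k :
  \sum_(2 ^ k <= m < 2 ^ k.+1) riemannR a m <= rho ^+ k.
Proof.
have two_k_gt0 : (0 : R) < (2 ^ k)%:R by rewrite ltr0n expn_gt0.
apply: (@le_trans _ _ (\sum_(2 ^ k <= m < 2 ^ k.+1) (((2 ^ k)%:R : R) `^ a)^-1)).
  rewrite big_nat_cond [X in _ <= X]big_nat_cond.
  apply: ler_sum => m /andP[/andP[km _] _] /=.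
  rewrite lef_pV2 ?posrE ?powR_gt0 ?ltr0n ?expn_gt0 //.
  rewrite ge0_ler_powR ?nnegrE ?ler0n ?ler_nat ?(leqW km) //.
  exact: le_trans (ltW a_gt1).
have -> : \sum_(2 ^ k <= m < 2 ^ k.+1) (((2 ^ k)%:R : R) `^ a)^-1
    = (2 ^ k)%:R `^ 1 / (2 ^ k)%:R `^ a.
  by rewrite sumr_const_nat expnS mul2n -addnn addnK powRr1 ?ler0n // mulr_natl.
rewrite -powRB; last first.
  by apply/implyP => _; rewrite gt_eqF.
by rewrite natrX -powR_mulrn ?ler0n // powRAC powR_mulrn.
Qed.

Lemma riemannR_dyadic_sum K :
  \sum_(0 <= m < 2 ^ K) riemannR a m <= 1 + \sum_(0 <= k < K) rho ^+ k.
Proof.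
elim: K => [|K IH].
  by rewrite expn0 big_nat1 big_geq // addr0 /riemannR mulr1n powR1 invr1.
rewrite (@big_cat_nat _ _ _ (2 ^ K)) //=; last by rewrite leq_pexp2l.
rewrite big_nat_recr //= addrA lerD //; exact: riemannR_dyadic_block.
Qed.

Let B : R := 1 + (1 - rho)^-1.

Lemma riemannR_partial_sum N : \sum_(0 <= m < N) riemannR a m <= B.
Proof.
have riemannR_ge0 m : 0 <= riemannR a m by rewrite invr_ge0 powR_ge0.
apply: (@le_trans _ _ (\sum_(0 <= m < 2 ^ N) riemannR a m)).
  rewrite (@big_cat_nat _ _ _ N _ (2 ^ N)) //=; last exact: ltnW (ltn_expl _ _).
  by rewrite lerDl sumr_ge0.
apply: le_trans (riemannR_dyadic_sum N) _; rewrite lerD2l.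
have := geometric_le_lim N ler01 rho_gt0.
rewrite ger0_norm ?(ltW rho_gt0) // mul1r => /(_ rho_lt1).
by under eq_bigr do rewrite -[rho ^+ _]mul1r.
Qed.

Lemma riemannR_uniq_sum (s : seq nat) : uniq s -> \sum_(m <- s) riemannR a m <= B.
Proof.
move=> s_uniq; apply: le_trans (riemannR_partial_sum (\max_(m <- s) m).+1).
rewrite /index_iota subn0; apply: ler_sum_uniq_subset; rewrite ?iota_uniq //.
  move=> m ms; rewrite mem_iota add0n ltnS.
  exact: (@leq_bigmax_seq _ _ xpredT id m ms).
by move=> m; rewrite invr_ge0 powR_ge0.
Qed.

Lemma riemannR_int_sum_bounded :
  exists B, forall s : seq int, uniq s -> \sum_(z <- s) riemannR a `|z|%N <= B.
Proof.
exists (B + B) => s s_uniq; rewrite (bigID (fun z : int => 0 <= z)) /=.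
have abs_uniq (P : pred int) : {in P &, injective (fun z : int => `|z|%N)} ->
    \sum_(z <- s | P z) riemannR a `|z|%N <= B.
  move=> abs_inj; rewrite -big_filter -(big_map _ xpredT (riemannR a)).
  by apply: riemannR_uniq_sum; rewrite map_inj_in_uniq ?filter_uniq // => x y;
    rewrite !mem_filter => /andP[Px _] /andP[Py _]; exact: abs_inj.
apply: lerD; apply: abs_uniq => x y /= Px Py.
  by rewrite -{2}(gez0_abs Px) -{2}(gez0_abs Py) => ->.
move: Px Py; rewrite !unfold_in /= -!ltNge => Px Py.
by move=> e; rewrite -(opprK x) -(opprK y) -(ltz0_abs Px) -(ltz0_abs Py) e.
Qed.

End riemannR_sums.

Lemma sum_prod_coord_le (R : numDomainType) (d : nat) (G : int -> R) (B : R) :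
  (forall z, 0 <= G z) -> (forall s : seq int, uniq s -> \sum_(z <- s) G z <= B) ->
  forall H : seq (Zd d), uniq H -> \sum_(q <- H) \prod_(j < d) G (q ord0 j) <= B ^+ d.
Proof.
move=> G_ge0 GB H H_uniq.
(* H embeds in the grid L^d, L the coordinates occurring in H; over the grid
   the sum of products factorises. *)
set L := undup (flatten [seq [seq q ord0 j | j <- enum 'I_d] | q : Zd d <- H]).
have L_uniq : uniq L by exact: undup_uniq.
pose vec (f : {ffun 'I_d -> 'I_(size L)}) : Zd d := \row_j nth 0 L (f j).
have vec_inj : injective vec.
  move=> f g /matrixP/(_ ord0) fg; apply/ffunP => j; apply/val_inj/eqP.
  by have := fg j; rewrite !mxE => /eqP; rewrite nth_uniq.
have H_sub : {subset H <= map vec (enum {ffun 'I_d -> 'I_(size L)})}.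
  move=> q qH.
  have qL j : (index (q ord0 j) L < size L)%N.
    rewrite index_mem mem_undup; apply/flatten_mapP.
    by exists q; rewrite ?map_f ?mem_enum.
  apply/mapP; exists [ffun j => Ordinal (qL j)]; rewrite ?mem_enum //.
  by apply/matrixP => i j; rewrite ord1 mxE ffunE nth_index // -index_mem.
apply: (le_trans (ler_sum_uniq_subset _ _ H_sub _)) => //.
- by rewrite map_inj_uniq ?enum_uniq.
- by move=> q; apply: prodr_ge0 => j _.
rewrite big_map big_enum /=.
under eq_bigr do under eq_bigr do rewrite mxE.
rewrite -(bigA_distr_bigA (fun (_ : 'I_d) (i : 'I_(size L)) => G (nth 0 L i))) /=.
rewrite -[in X in _ <= X](card_ord d) -prodr_const.
apply: ler_prod => j _; rewrite sumr_ge0 //=.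
by rewrite -(big_mkord xpredT (fun i => G (nth 0 L i))) -(big_nth 0 xpredT) GB.
Qed.

Section lattice_norm.
Variables (R : realType) (d : nat) (nrm : Zd d -> R).
Hypothesis nrm_norm : is_Zd_norm nrm.

Lemma nrm0 : nrm 0 = 0.
Proof.
by case: nrm_norm => _ _ _ nrmZ _; rewrite -(scale0r (0 : Zd d)) nrmZ normr0 mul0r.
Qed.

Lemma nrm_ge1 q : q != 0 -> 1 <= nrm q.
Proof.
case: nrm_norm => _ _ _ _ coord_le q_neq0.
have [j qj_neq0] : exists j, q ord0 j != 0.
  apply/existsP; apply: contraNT q_neq0 => /existsPn q0.
  by apply/eqP/matrixP => i j; rewrite ord1 mxE; exact/eqP/negPn.
by apply: le_trans (coord_le q j); rewrite ler1z -gtz0_ge1 normr_gt0.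
Qed.

Lemma nrm1_ge1 q : 1 <= nrm1 nrm q.
Proof. by rewrite /nrm1; case: eqP => // /eqP; exact: nrm_ge1. Qed.

Lemma nrm1_gt0 q : 0 < nrm1 nrm q.
Proof. exact: lt_le_trans ltr01 (nrm1_ge1 q). Qed.

Lemma nrm_le_nrm1 q : nrm q <= nrm1 nrm q.
Proof. by rewrite /nrm1; case: eqP => [->|//]; rewrite nrm0 ler01. Qed.

Lemma coord_le_nrm1 (q : Zd d) j : `|q ord0 j|%:~R <= nrm1 nrm q.
Proof. by case: nrm_norm => _ _ _ _ coord_le; exact: le_trans (nrm_le_nrm1 q). Qed.

Lemma nrm1_triangle k q : nrm1 nrm k <= nrm1 nrm q + nrm1 nrm (k - q).
Proof.
case: nrm_norm => _ _ nrmD _ _.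
rewrite {1}/nrm1; case: eqP => _.
  by have := nrm1_ge1 q; have := nrm1_ge1 (k - q); lra.
apply: le_trans (lerD (nrm_le_nrm1 q) (nrm_le_nrm1 (k - q))).
by rewrite -{1}(subrKC q k) nrmD.
Qed.

End lattice_norm.

Section weight.
Variables (R : realType) (d : nat) (nrm : Zd d -> R) (sig : R).
Hypothesis nrm_norm : is_Zd_norm nrm.
Hypothesis d_gt0 : (0 < d)%N.
Hypothesis sig_gt_d : d%:R < sig.

Definition weight (q : Zd d) : R := (nrm1 nrm q `^ sig)^-1.

Let sig_ge0 : 0 <= sig. Proof. exact: le_trans (ltW sig_gt_d). Qed.

Lemma weight_gt0 q : 0 < weight q.
Proof. by rewrite invr_gt0 powR_gt0 // nrm1_gt0. Qed.

Lemma weight0 : weight 0 = 1.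
Proof. by rewrite /weight /nrm1 eqxx powR1 invr1. Qed.

Lemma weight_neq0 q : q != 0 -> weight q = (nrm q `^ sig)^-1.
Proof. by move=> q_neq0; rewrite /weight /nrm1 (negbTE q_neq0). Qed.

Let inv_powR_double (y : R) :
  0 < y -> (y `^ sig)^-1 = 2 `^ sig * ((2 * y) `^ sig)^-1.
Proof.
by move=> y_gt0; rewrite powRM ?ler0n ?(ltW y_gt0) // invfM mulrA divff ?mul1r.
Qed.

Lemma weight_le_half k q :
  nrm1 nrm k <= 2 * nrm1 nrm q -> weight q <= 2 `^ sig * weight k.
Proof.
move=> kq; rewrite /weight inv_powR_double ?nrm1_gt0 // ler_wpM2l ?powR_ge0 //.
have nrm1_ge0 p : 0 <= nrm1 nrm p by exact: ltW (nrm1_gt0 nrm_norm p).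
rewrite lef_pV2 ?posrE ?powR_gt0 ?mulr_gt0 ?nrm1_gt0 //.
by rewrite ge0_ler_powR ?nnegrE ?mulr_ge0.
Qed.

Lemma weight_mul_le k q :
  weight q * weight (k - q) <= 2 `^ sig * weight k * (weight q + weight (k - q)).
Proof.
have tri := nrm1_triangle nrm_norm k q.
have wq_gt0 := weight_gt0 q; have wkq_gt0 := weight_gt0 (k - q).
have [kq|qk] := leP (nrm1 nrm (k - q)) (nrm1 nrm q).
  have : weight q <= 2 `^ sig * weight k by apply: weight_le_half; lra.
  move: (2 `^ sig * weight k) => c; nra.
have : weight (k - q) <= 2 `^ sig * weight k by apply: weight_le_half; lra.
move: (2 `^ sig * weight k) => c; nra.
Qed.

Lemma weight_le_prod q :
  weight q <= 2 `^ sig * \prod_(j < d) riemannR (sig / d%:R) `|q ord0 j|%N.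
Proof.
have d_neq0 : (d%:R : R) != 0 by rewrite pnatr_eq0 -lt0n.
rewrite /weight prodfV inv_powR_double ?nrm1_gt0 // ler_wpM2l ?powR_ge0 //.
rewrite lef_pV2 ?posrE ?powR_gt0 ?mulr_gt0 ?nrm1_gt0 //; last first.
  by apply: prodr_gt0 => j _; rewrite powR_gt0.
have -> : (2 * nrm1 nrm q) `^ sig = \prod_(j < d) (2 * nrm1 nrm q) `^ (sig / d%:R).
  by rewrite prodr_const card_ord -powR_mulrn ?powR_ge0 // -powRrM divfK.
have nrm1q_ge0 := ltW (nrm1_gt0 nrm_norm q).
apply: ler_prod => j _.
rewrite powR_ge0 ge0_ler_powR ?nnegrE ?divr_ge0 ?ler0n ?mulr_ge0 ?ler0n //=.
rewrite -addn1 natrD natr_absz.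
by have := coord_le_nrm1 nrm_norm q j; have := nrm1_ge1 nrm_norm q; lra.
Qed.

Lemma weight_sum_bounded :
  exists S, forall H : seq (Zd d), uniq H -> \sum_(q <- H) weight q <= S.
Proof.
have tau_gt1 : 1 < sig / d%:R by rewrite ltr_pdivlMr ?ltr0n // mul1r.
have [B riemannB] := riemannR_int_sum_bounded tau_gt1.
exists (2 `^ sig * B ^+ d) => H H_uniq.
apply: le_trans (ler_sum _ (fun q _ => weight_le_prod q)) _.
rewrite -mulr_sumr ler_wpM2l ?powR_ge0 //.
apply: (sum_prod_coord_le (G := fun z => riemannR (sig / d%:R) `|z|%N)) => // z.
by rewrite invr_ge0 powR_ge0.
Qed.

Lemma weight_conv_bounded : exists2 K, 0 <= K & forall k (H : seq (Zd d)),
  uniq H -> \sum_(q <- H) weight q * weight (k - q) <= K * weight k.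
Proof.
have [S weightS] := weight_sum_bounded.
have S_ge0 : 0 <= S by have := weightS [::]; rewrite big_nil; exact.
exists (2 `^ sig * (S + S)) => [|k H H_uniq].
  by rewrite mulr_ge0 ?powR_ge0 ?addr_ge0.
apply: le_trans (ler_sum _ (fun q _ => weight_mul_le k q)) _.
rewrite -mulr_sumr big_split /= [X in _ <= X]mulrAC ler_wpM2l //.
  by rewrite mulr_ge0 ?powR_ge0 ?(ltW (weight_gt0 k)).
apply: lerD; first exact: weightS.
rewrite -(big_map (fun q => k - q) xpredT weight) weightS //.
by rewrite map_inj_uniq // => p q /subrI.
Qed.

End weight.

Fixpoint seqs_over (T : Type) (H : seq T) (l : nat) : seq (seq T) :=
  if l is l'.+1 then [seq q :: t | q <- H, t <- seqs_over H l'] else [:: [::]].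

Lemma seqs_over_uniq (T : eqType) (H : seq T) l : uniq H -> uniq (seqs_over H l).
Proof.
move=> H_uniq; elim: l => [|l IH] //=.
by apply: allpairs_uniq => // -[x1 t1] [x2 t2] _ _ [-> ->].
Qed.

Lemma mem_seqs_over (T : eqType) (H t : seq T) :
  {subset t <= H} -> t \in seqs_over H (size t).
Proof.
elim: t => [|q t IH] tH /=; first by rewrite inE.
apply: (allpairs_f (fun q t => q :: t)); first by apply: tH; rewrite inE eqxx.
by apply: IH => x xt; apply: tH; rewrite inE xt orbT.
Qed.

Section iterated_convolution.
Variables (R : numDomainType) (V : zmodType) (w : V -> R) (K : R).
Hypotheses (w_ge0 : forall q, 0 <= w q) (w0_ge1 : 1 <= w 0) (K_ge0 : 0 <= K).
Hypothesis w_conv : forall k (H : seq V),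
  uniq H -> \sum_(q <- H) w q * w (k - q) <= K * w k.

Lemma iterated_conv_le (H : seq V) l k : uniq H ->
  \sum_(t <- seqs_over H l | \sum_(q <- t) q == k) \prod_(q <- t) w q <= K ^+ l * w k.
Proof.
move=> H_uniq; elim: l k => [|l IH] k /=.
  rewrite big_cons big_nil !big_nil expr0 mul1r addr0.
  by case: eqP => [<- //|_]; exact: w_ge0.
rewrite big_mkcond big_allpairs_dep /=.
apply: (@le_trans _ _ (\sum_(q <- H) w q * (K ^+ l * w (k - q)))).
  apply: ler_sum => q _; apply: le_trans (ler_wpM2l (w_ge0 q) (IH (k - q))).
  rewrite mulr_sumr [X in _ <= X]big_mkcond; apply: ler_sum => t _ /=.
  have -> : (\sum_(p <- t) p == k - q) = (q + \sum_(p <- t) p == k).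
    by rewrite eq_sym subr_eq eq_sym addrC.
  rewrite !big_cons.
  by case: ifP; rewrite ?mulr0.
under eq_bigr do rewrite mulrCA.
by rewrite -mulr_sumr exprSr -mulrA ler_wpM2l ?exprn_ge0 ?w_conv.
Qed.
End iterated_convolution.

Lemma order_le_pderiv (R : realType) n d r (v : slot n d r) (P : cpoly R n d r) :
  order_le P -> order_le (pderiv v P).
Proof.
move=> P_ord m /flatten_mapP[m' m'P /mapP[p _ ->]] x /=.
by rewrite mem_cat => /orP[/mem_take|/mem_drop]; exact: P_ord.
Qed.

Lemma zpow_norm_le (R : realType) d r (nrm : Zd d -> R) (q : Zd d) (al : mindex d r) :
  is_Zd_norm nrm -> (mdeg al <= r)%N -> `|zpow (R := R) q al| <= (nrm1 nrm q ^+ r)%:C.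
Proof.
move=> nrm_norm al_le.
have -> : zpow (R := R) q al = (\prod_(j < d) ((q ord0 j)%:~R : R) ^+ al j)%:C.
  by rewrite rmorph_prod; apply: eq_bigr => j _; rewrite rmorphXn rmorph_int.
rewrite norm_realC lecR normr_prod.
apply: (@le_trans _ _ (\prod_(j < d) nrm1 nrm q ^+ al j)); last first.
  by rewrite prodrXr -/(mdeg al) ler_weXn2l ?nrm1_ge1.
apply: ler_prod => j _; rewrite normr_ge0 normrX lerXn2r ?nnegrE ?normr_ge0 //.
  exact: ltW (nrm1_gt0 nrm_norm q).
by rewrite -intr_norm coord_le_nrm1.
Qed.

Section coefficient_bounds.
Variables (R : realType) (d n r : nat) (nrm : Zd d -> R) (s C K : R).
Hypotheses (nrm_norm : is_Zd_norm nrm) (C_ge0 : 0 <= C) (K_ge0 : 0 <= K).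
Hypothesis weight_conv : forall k (H : seq (Zd d)), uniq H ->
  \sum_(q <- H) weight nrm (s - r%:R) q * weight nrm (s - r%:R) (k - q)
    <= K * weight nrm (s - r%:R) k.

Local Notation w := (weight nrm (s - r%:R)).

Let w_ge0 q : 0 <= w q. Proof. exact: ltW (weight_gt0 _ nrm_norm q). Qed.

Definition coef_bound (P : cpoly R n d r) : R :=
  \sum_(m <- P) Normc.normc m.1 * (2 * (C * K) ^+ size m.2).

Definition sum_pderivs (f : cpoly R n d r -> R) (P : cpoly R n d r) : R :=
  \sum_(i : 'I_n) \sum_(al : mindex d r | (mdeg al <= r)%N) f (pderiv (i, al) P).

Lemma coef_bound_ge0 P : 0 <= coef_bound P.
Proof.
apply: sumr_ge0 => -[[x y] vs] _.
by rewrite mulr_ge0 ?sqrtr_ge0 ?mulr_ge0 ?exprn_ge0 ?mulr_ge0.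
Qed.

Lemma sum_pderivs_ge0 f P : (forall Q, 0 <= f Q) -> 0 <= sum_pderivs f P.
Proof. by move=> f_ge0; do 2!apply: sumr_ge0 => ? _. Qed.

Lemma pderiv_symbol_norm_le (f : cpoly R n d r -> R) P (X : mindex d r -> Cpl R) c i j :
  (forall Q, 0 <= f Q) -> 0 <= c ->
  (forall al, (mdeg al <= r)%N -> `|X al| <= (f (pderiv (i, al) P) * c)%:C) ->
  `|\sum_(al : mindex d r | (mdeg al <= r)%N) X al * 'i ^+ mdeg al * zpow j al|
    <= (sum_pderivs f P * nrm1 nrm j ^+ r * c)%:C.
Proof.
move=> f_ge0 c_ge0 X_le; apply: le_trans (ler_norm_sum _ _ _) _.
apply: (@le_trans _ _ (\sum_(al : mindex d r | (mdeg al <= r)%N)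
    (f (pderiv (i, al) P) * nrm1 nrm j ^+ r * c)%:C)).
  apply: ler_sum => al al_ord.
  rewrite !normrM normrX normCi expr1n mulr1 mulrAC rmorphM.
  by apply: ler_pM => //; [exact: X_le | exact: zpow_norm_le].
rewrite -rmorph_sum lecR -!mulr_suml ler_wpM2r //.
rewrite ler_wpM2r ?exprn_ge0 ?(ltW (nrm1_gt0 nrm_norm j)) //.
rewrite /sum_pderivs (bigD1 i) //= lerDl.
by apply: sumr_ge0 => i' _; apply: sumr_ge0.
Qed.

Section fixed_coefficients.
Variable a : Zd d -> 'I_n -> Cpl R.
Hypothesis a0_le : forall i, `|a 0 i| <= C%:C.
Hypothesis a_le : forall k i, k != 0 -> `|a k i| <= (C / nrm k `^ s)%:C.

Lemma coef_norm_le q i : `|a q i| <= (C / nrm1 nrm q `^ s)%:C.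
Proof.
rewrite /nrm1; case: eqP => [->|/eqP q_neq0]; last exact: a_le.
by rewrite powR1 divr1.
Qed.

Lemma vcoef_norm_le (v : slot n d r) q : (mdeg v.2 <= r)%N ->
  `|vcoef a v q| <= (C * w q)%:C.
Proof.
move=> v_ord; rewrite /vcoef !normrM normrX normCi expr1n mul1r.
apply: le_trans (ler_pM _ _ (zpow_norm_le q nrm_norm v_ord) (coef_norm_le q v.1)) _ => //.
have nrm1q_gt0 := nrm1_gt0 nrm_norm q.
rewrite -rmorphM lecR /weight powRB ?(gt_eqF nrm1q_gt0) ?implybT //.
by rewrite -(powR_mulrn _ (ltW nrm1q_gt0)) invf_div mulrCA.
Qed.

Lemma prod_vcoef_norm_le (vs : seq (slot n d r)) (t : seq (Zd d)) :
  size vs = size t -> (forall v, v \in vs -> (mdeg v.2 <= r)%N) ->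
  `|\prod_(x <- zip vs t) vcoef a x.1 x.2| <= (C ^+ size t * \prod_(q <- t) w q)%:C.
Proof.
elim: vs t => [|v vs IH] [|q t] //= size_vt vs_ord.
  by rewrite !big_nil normr1 mulr1.
rewrite !big_cons normrM exprS mulrACA rmorphM.
apply: ler_pM => //; first by apply: vcoef_norm_le; apply: vs_ord; rewrite inE eqxx.
by apply: IH => [|u u_vs]; [case: size_vt | apply: vs_ord; rewrite inE u_vs orbT].
Qed.

Lemma mono_fam_sum_le (vs : seq (slot n d r)) k (J : {fset seq (Zd d)}) :
  (forall v, v \in vs -> (mdeg v.2 <= r)%N) ->
  \sum_(t <- J) `|mono_fam a vs k t| <= ((C * K) ^+ size vs * w k)%:C.
Proof.
move=> vs_ord; set l := size vs.
pose F (t : seq (Zd d)) := C ^+ l * \prod_(q <- t) w q.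
have F_ge0 t : 0 <= F t.
  by rewrite mulr_ge0 ?exprn_ge0 //; apply: prodr_ge0 => q _.
apply: (@le_trans _ _ (\sum_(t <- J | (size t == l) && (\sum_(q <- t) q == k)) (F t)%:C)).
  rewrite [X in _ <= X]big_mkcond; apply: ler_sum => t _; rewrite /mono_fam.
  case: ifP => [/andP[/eqP size_t _]|_]; last by rewrite normr0.
  by rewrite /F /l -size_t; exact: prod_vcoef_norm_le.
rewrite -rmorph_sum lecR.
set H := undup (flatten J).
apply: (@le_trans _ _ (\sum_(t <- seqs_over H l | \sum_(q <- t) q == k) F t)).
  rewrite -big_filter -[X in _ <= X]big_filter.
  apply: ler_sum_uniq_subset => //;
    rewrite ?filter_uniq ?fset_uniq ?seqs_over_uniq ?undup_uniq //.
  move=> t; rewrite !mem_filter => /andP[/andP[/eqP size_t ->] tJ] /=.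
  rewrite -size_t; apply: mem_seqs_over => x xt.
  by rewrite mem_undup; apply/flattenP; exists t.
rewrite -big_distrr /= exprMn -mulrA ler_wpM2l ?exprn_ge0 //.
by apply: iterated_conv_le; rewrite ?undup_uniq ?weight0.
Qed.

Lemma Fc_norm_le (P : cpoly R n d r) k : order_le P ->
  Fc_abs a P k /\ `|Fc a P k| <= (coef_bound P * w k)%:C.
Proof.
move=> P_ord.
have mono_le m : m \in P -> forall J : {fset seq (Zd d)},
    \sum_(t <- J) `|mono_fam a m.2 k t| <= ((C * K) ^+ size m.2 * w k)%:C.
  by move=> mP J; apply: mono_fam_sum_le => v; exact: P_ord.
split=> [m mP|]; first by eexists; exact: mono_le.
rewrite /Fc /coef_bound mulr_suml rmorph_sum; apply: le_trans (ler_norm_sum _ _ _) _.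
rewrite big_seq_cond [X in _ <= X]big_seq_cond; apply: ler_sum => m /andP[mP _].
rewrite normrM (_ : `|m.1| = (Normc.normc m.1)%:C); last by case: (m.1).
apply: le_trans (ler_wpM2l _ (usum_norm_le (mono_le m mP))) _.
  by rewrite lecR; case: (m.1) => x y; exact: sqrtr_ge0.
by rewrite -!rmorphM lecR -[X in _ <= X]mulrA mulr_natl mulrnAl mulr2n.
Qed.

Lemma dN_norm_le P k j i : order_le P ->
  `|dN a P k j i| <= (sum_pderivs coef_bound P * nrm1 nrm j ^+ r * w (k - j))%:C.
Proof.
move=> P_ord; apply: (pderiv_symbol_norm_le (i := i)) => [Q||al _].
- exact: coef_bound_ge0.
- exact: w_ge0.
- by case: (Fc_norm_le (k - j) (order_le_pderiv (v := (i, al)) P_ord)).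
Qed.

Lemma d2N_dN P k j1 j2 i1 i2 : d2N a P k j1 j2 i1 i2 =
  \sum_(al1 : mindex d r | (mdeg al1 <= r)%N)
     dN a (pderiv (i1, al1) P) (k - j1) j2 i2 * 'i ^+ mdeg al1 * zpow j1 al1.
Proof.
rewrite /d2N /dN; apply: eq_bigr => al1 _; rewrite !mulr_suml; apply: eq_bigr => al2 _.
by rewrite exprD; ring.
Qed.

Lemma d2N_norm_le P k j1 j2 i1 i2 : order_le P ->
  `|d2N a P k j1 j2 i1 i2| <= (sum_pderivs (sum_pderivs coef_bound) P
     * nrm1 nrm j1 ^+ r * (nrm1 nrm j2 ^+ r * w (k - j1 - j2)))%:C.
Proof.
move=> P_ord; rewrite d2N_dN; apply: (pderiv_symbol_norm_le (i := i1)) => [Q||al _].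
- exact: sum_pderivs_ge0 coef_bound_ge0.
- by rewrite mulr_ge0 ?exprn_ge0 ?(ltW (nrm1_gt0 nrm_norm j2)).
- by rewrite mulrA; apply: dN_norm_le; exact: order_le_pderiv.
Qed.

End fixed_coefficients.
End coefficient_bounds.

Theorem mainTheorem1 (R : realType) (d n r : nat)
  (hd : (1 <= d)%N) (hn : (1 <= n)%N)
  (nrm : Zd d -> R) (Hnrm : is_Zd_norm nrm)
  (N : cpoly R n d r) (HN : order_le N)
  (s : R) (hs : (d + r)%:R < s) (C : R) (hC : 0 < C) :
  exists D D1 D2 : R,
  forall a : Zd d -> 'I_n -> Cpl R,
    (forall i, `|a 0 i| <= C%:C) ->
    (forall k i, k != 0 -> `|a k i| <= (C / nrm k `^ s)%:C) ->
    [/\ (* absolute convergence of the formal series *)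
        (forall k, Fc_abs a N k),
        (forall k j (i : 'I_n) (al : mindex d r), (mdeg al <= r)%N ->
          Fc_abs a (pderiv (i, al) N) (k - j))
        /\ (forall k j1 j2 (i1 i2 : 'I_n) (al1 al2 : mindex d r),
          (mdeg al1 <= r)%N -> (mdeg al2 <= r)%N ->
          Fc_abs a (pderiv (i2, al2) (pderiv (i1, al1) N)) (k - j1 - j2)),
        (* estimates on N_k *)
        (forall k, k != 0 -> `|Fc a N k| <= (D / nrm k `^ (s - r%:R))%:C)
          /\ `|Fc a N 0| <= D%:C,
        (* estimates on dN_k/da_j *)
        (forall k j i, k != j ->
           `|dN a N k j i| <= (D1 * nrm1 nrm j ^+ r / nrm (k - j) `^ (s - r%:R))%:C)
          /\ (forall k j i, k = j -> `|dN a N k j i| <= (D1 * nrm1 nrm j ^+ r)%:C)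
      & (* estimates on d^2N_k/(da_j1 da_j2) *)
        (forall k j1 j2 i1 i2, k != j1 + j2 ->
           `|d2N a N k j1 j2 i1 i2|
             <= (D2 * nrm1 nrm j1 ^+ r * nrm1 nrm j2 ^+ r
                   / nrm (k - j1 - j2) `^ (s - r%:R))%:C)
          /\ (forall k j1 j2 i1 i2, k = j1 + j2 ->
           `|d2N a N k j1 j2 i1 i2| <= (D2 * nrm1 nrm j1 ^+ r * nrm1 nrm j2 ^+ r)%:C)].
Proof.
have sig_gt_d : d%:R < s - r%:R by rewrite ltrBrDr -natrD.
have [K K_ge0 conv] := weight_conv_bounded Hnrm hd sig_gt_d.
have w_nz k : k != 0 -> (nrm k `^ (s - r%:R))^-1 = weight nrm (s - r%:R) k.
  by move/weight_neq0 ->.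
have w0 := weight0 nrm (s - r%:R).
have C_ge0 := ltW hC.
exists (coef_bound C K N), (sum_pderivs (coef_bound C K) N),
  (sum_pderivs (sum_pderivs (coef_bound C K)) N) => a a0_le a_le.
have Fc_le P k := Fc_norm_le Hnrm C_ge0 K_ge0 conv a0_le a_le (P := P) k.
have dN_le k j i := dN_norm_le Hnrm C_ge0 K_ge0 conv a0_le a_le k j i HN.
have d2N_le k j1 j2 i1 i2 :=
  d2N_norm_le Hnrm C_ge0 K_ge0 conv a0_le a_le k j1 j2 i1 i2 HN.
split.
- by move=> k; case: (Fc_le N k HN).
- split=> [k j i al _ | k j1 j2 i1 i2 al1 al2 _ _]; apply: (proj1 (Fc_le _ _ _)).
    exact: order_le_pderiv.
  by do 2!apply: order_le_pderiv.
- split=> [k /w_nz ->|]; first by case: (Fc_le N k HN).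
  by rewrite -[X in X%:C]mulr1 -w0; case: (Fc_le N 0 HN).
- split=> [k j i kj | k j i ->].
    by rewrite w_nz ?dN_le // subr_eq0.
  by rewrite -[X in X%:C]mulr1 -w0 -(subrr j) dN_le.
- split=> [k j1 j2 i1 i2 kj | k j1 j2 i1 i2 ->].
    have kj_neq0 : k - j1 - j2 != 0 by rewrite -addrA -opprD subr_eq0.
    by rewrite w_nz // -mulrA d2N_le.
  by rewrite -[X in X%:C]mulr1 -w0 -(subrr (j1 + j2)) opprD addrA -mulrA d2N_le.
Qed.
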